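(* Let $X$ be a first-countable well-filtered space such that $\min(K)$ is countable for every $K\in\mathsf{K}(X)$. The following are equivalent: (1) $X$ is locally compact. (2) $\mathsf{K}(X)$ is a continuous semilattice, and $\xi_X^\sigma:X\to\Sigma\,\mathsf{K}(X)$, $x\mapsto\uparrow x$, is continuous. (3) $\mathsf{K}(X)$ is a continuous semilattice, and $X$ has property Q. (4) $\mathsf{K}(X)$ is a continuous semilattice. (5) $X$ is core compact.
   Context: Spaces are $T_0$; specialization order $x\le y$ iff $x\in\overline{\{y\}}$; saturated = upper set; $\min(K)$ = minimal points of $K$. $\mathsf{K}(X)$ = nonempty compact saturated subsets ordered by reverse inclusion (suprema, when they exist, are intersections). Scott topology on a poset: upper sets $U$ such that every directed $D$ with existing supremum in $U$ meets $U$; $\Sigma Q$ is $Q$ with it. $a\ll b$ means for every directed $D$ with existing $\bigvee D\ge b$ some $d\in D$ has $d\ge a$; $\mathsf{K}(X)$ is a continuous semilattice if it is directed complete and each $K$ is the directed supremum of $\{L:L\ll K\}$. Well-filtered: for open $U$ and $\mathcal K\subseteq\mathsf{K}(X)$ filtered under inclusion, $\bigcap\mathcal K\subseteq U$ implies some $K\in\mathcal K$ lies in $U$. Property Q: $K_1\ll K_2$ iff $K_2\subseteq\operatorname{int}K_1$. Locally compact: neighborhood bases of compact sets. Core compact: open-set lattice is continuous. *)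

From Stdlib Require Import Classical List FunctionalExtensionality PropExtensionality.
Set Implicit Arguments.
Unset Strict Implicit.

Record space := Space {
  pt :> Type;
  open : (pt -> Prop) -> Prop;
  open_full : open (fun _ => True);
  open_inter : forall U V, open U -> open V -> open (fun x => U x /\ V x);
  open_union : forall F : (pt -> Prop) -> Prop,
      (forall U, F U -> open U) -> open (fun x => exists U, F U /\ U x)
}.

Section Topology.
Variable X : space.

Definition subset (A B : X -> Prop) : Prop := forall x, A x -> B x.
Definition closed (C : X -> Prop) : Prop := @open X (fun x => ~ C x).
Definition closure (A : X -> Prop) : X -> Prop :=
  fun x => forall C, closed C -> subset A C -> C x.
Definition interior (A : X -> Prop) : X -> Prop :=
  fun x => exists U, @open X U /\ U x /\ subset U A.

Definition T0 : Prop :=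
  forall x y : X, (forall U, @open X U -> (U x <-> U y)) -> x = y.

Definition spec_le (x y : X) : Prop := closure (fun z => z = y) x.

Definition saturated (A : X -> Prop) : Prop :=
  forall x y, A x -> spec_le x y -> A y.

Definition up (x : X) : X -> Prop := fun y => spec_le x y.

Definition minimal (K : X -> Prop) : X -> Prop :=
  fun x => K x /\ forall y, K y -> spec_le y x -> y = x.

Definition compact (K : X -> Prop) : Prop :=
  forall F : (X -> Prop) -> Prop, (forall U, F U -> @open X U) ->
    subset K (fun x => exists U, F U /\ U x) ->
    exists l : list (X -> Prop), (forall U, In U l -> F U) /\
      subset K (fun x => exists U, In U l /\ U x).

Definition inKX (K : X -> Prop) : Prop :=
  (exists x, K x) /\ compact K /\ saturated K.

Definition countable (A : X -> Prop) : Prop :=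
  exists f : X -> nat, forall a b, A a -> A b -> f a = f b -> a = b.

Definition nbhd (N : X -> Prop) (x : X) : Prop :=
  exists U, @open X U /\ U x /\ subset U N.

Definition first_countable : Prop :=
  forall x : X, exists B : nat -> (X -> Prop),
    (forall n, nbhd (B n) x) /\ (forall N, nbhd N x -> exists n, subset (B n) N).

Definition filtered_family (KK : (X -> Prop) -> Prop) : Prop :=
  (exists K, KK K) /\
  forall K1 K2, KK K1 -> KK K2 ->
    exists K3, KK K3 /\ subset K3 K1 /\ subset K3 K2.

Definition well_filtered : Prop :=
  forall (U : X -> Prop) (KK : (X -> Prop) -> Prop),
    @open X U -> (forall K, KK K -> inKX K) -> filtered_family KK ->
    subset (fun x => forall K, KK K -> K x) U ->
    exists K, KK K /\ subset K U.

Definition locally_compact : Prop :=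
  forall x (U : X -> Prop), @open X U -> U x ->
    exists K, compact K /\ nbhd K x /\ subset K U.

End Topology.

Section Order.
Variables (P : Type) (le : P -> P -> Prop).

Definition directed (D : P -> Prop) : Prop :=
  (exists d, D d) /\
  forall a b, D a -> D b -> exists c, D c /\ le a c /\ le b c.

Definition is_sup (D : P -> Prop) (s : P) : Prop :=
  (forall d, D d -> le d s) /\ (forall u, (forall d, D d -> le d u) -> le s u).

Definition way_below (a b : P) : Prop :=
  forall D s, directed D -> is_sup D s -> le b s -> exists d, D d /\ le a d.

Definition directed_complete : Prop :=
  forall D, directed D -> exists s, is_sup D s.

Definition continuous_poset : Prop :=
  directed_complete /\
  forall b, directed (fun a => way_below a b) /\ is_sup (fun a => way_below a b) b.

Definition scott_open (U : P -> Prop) : Prop :=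
  (forall a b, U a -> le a b -> U b) /\
  (forall D s, directed D -> is_sup D s -> U s -> exists d, D d /\ U d).

End Order.

Definition KX (X : space) : Type := { K : X -> Prop | inKX K }.
Definition KX_le (X : space) (A B : KX X) : Prop :=
  subset (proj1_sig B) (proj1_sig A).

Definition OX (X : space) : Type := { U : X -> Prop | @open X U }.
Definition OX_le (X : space) (U V : OX X) : Prop :=
  subset (proj1_sig U) (proj1_sig V).

Definition core_compact (X : space) : Prop := continuous_poset (@OX_le X).

Definition property_Q (X : space) : Prop :=
  forall K1 K2 : KX X, way_below (@KX_le X) K1 K2 <->
    subset (proj1_sig K2) (interior (proj1_sig K1)).

Lemma spec_le_open (X : space) (x y : X) :
  spec_le x y <-> forall U, @open X U -> U x -> U y.
Proof.
  split.
  - intros H U HU Ux. apply NNPP; intro nUy.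
    assert (Hc : closed (fun z => ~ U z)).
    { unfold closed.
      assert (E : (fun x0 => ~ ~ U x0) = U).
      { apply FunctionalExtensionality.functional_extensionality; intro z.
        apply PropExtensionality.propositional_extensionality; split;
          [apply NNPP | auto]. }
      rewrite E; exact HU. }
    apply (H _ Hc); [intros z ->; exact nUy | exact Ux].
  - intros H C HC Hsub. apply NNPP; intro nCx.
    apply (H _ HC nCx). apply Hsub; reflexivity.
Qed.

Lemma up_inKX (X : space) (x : X) : inKX (up x).
Proof.
  split; [|split].
  - exists x. unfold up. apply spec_le_open; auto.
  - intros F HF Hcov.
    destruct (Hcov x) as [U [FU Ux]].
    { unfold up. apply spec_le_open; auto. }
    exists (U :: nil). split.
    + intros V [<-|[]]; exact FU.
    + intros y Hy. exists U. split; [left; reflexivity|].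
      unfold up in Hy. rewrite spec_le_open in Hy. apply Hy; [apply HF; exact FU | exact Ux].
  - intros y z Hy Hz. unfold up in *. rewrite spec_le_open in *.
    intros U HU Ux. apply Hz; [exact HU | apply Hy; assumption].
Qed.

Definition upK (X : space) (x : X) : KX X := exist _ (up x) (up_inKX x).

Definition xi_sigma_continuous (X : space) : Prop :=
  forall 𝒰 : KX X -> Prop, scott_open (@KX_le X) 𝒰 -> @open X (fun x => 𝒰 (upK x)).

From Stdlib Require Import Classical List.
From Stdlib Require Import ClassicalEpsilon FunctionalExtensionality PropExtensionality.
From Stdlib Require Import Lia PeanoNat.
From mathcomp Require classical_sets.

Set Implicit Arguments.
Unset Strict Implicit.

(* (1) => (3), (5): in a locally compact space the compact saturated
   neighbourhoods of a compact saturated set b form a directed family with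
   intersection b, so by well-filteredness a << b exactly when b lies in the
   interior of a, and this interior is what makes x |-> up x Scott-continuous.
   (4) => (1): for x in an open U, well-filteredness gives k << up x inside U.
   If k were not a neighbourhood of x, first countability would give points
   y_n outside k converging to x; the sets up({x} u {y_m | m >= n}) are then a
   directed family with supremum up x and no member inside k.
   (5) => (1): interpolate U = V_0 >> V_1 >> V_2 >> ... >> W around x.  The
   intersection of the V_n is compact: were G an open set containing it but no
   V_n, take by Zorn a maximal open O with no V_n inside O u G; points
   a_n in V_n outside O u G converge to every point outside O u G, so the
   compact saturated sets up{a_m | m >= n} would contradict well-filteredness. *)

Section Topology.
Variable X : space.
Implicit Types (A B C K U V : X -> Prop) (x y z : X).

Definition bigunion (F : (X -> Prop) -> Prop) : X -> Prop :=
  fun x => exists U, F U /\ U x.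

Definition up_closure A : X -> Prop := fun z => exists y, A y /\ spec_le y z.

Lemma not_subset_ex A B : ~ subset A B -> exists x, A x /\ ~ B x.
Proof.
  intros H. apply NNPP; intros Hno. apply H; intros x Ax.
  apply NNPP; intros nBx. apply Hno. exists x; auto.
Qed.

Lemma subset_trans A B C : subset A B -> subset B C -> subset A C.
Proof. intros HAB HBC x Ax. auto. Qed.

Lemma open_ext U V : (forall x, U x <-> V x) -> open U -> open V.
Proof.
  intros HUV HU. replace V with U; [exact HU|].
  apply functional_extensionality; intro x; apply propositional_extensionality, HUV.
Qed.

Lemma open_of_nbhd U : (forall x, U x -> nbhd U x) -> open U.
Proof.
  intros HU. apply (open_ext (U := bigunion (fun O => open O /\ subset O U))).
  - intro x; split.
    + intros [O [[_ HOU] Ox]]. exact (HOU x Ox).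
    + intros Ux. destruct (HU x Ux) as [O [HO [Ox HOU]]]. exists O; auto.
  - apply open_union. intros O [HO _]; exact HO.
Qed.

Lemma open_empty : open (fun _ : X => False).
Proof.
  apply open_of_nbhd. intros x [].
Qed.

Lemma open_union2 U V : open U -> open V -> open (fun x => U x \/ V x).
Proof.
  intros HU HV. apply (open_ext (U := bigunion (fun W => W = U \/ W = V))).
  - intro x; split.
    + intros [W [[-> | ->] Wx]]; auto.
    + intros [Ux | Vx]; [exists U | exists V]; auto.
  - apply open_union. intros W [-> | ->]; auto.
Qed.

Lemma open_nbhd U x : open U -> U x -> nbhd U x.
Proof. intros HU Ux. exists U; repeat split; auto. intros y Uy; exact Uy. Qed.

Lemma nbhd_mono A B x : subset A B -> nbhd A x -> nbhd B x.
Proof. intros HAB [O [HO [Ox HOA]]]. exists O; repeat split; auto. intros y Oy; auto. Qed.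

Lemma nbhd_inter A B x : nbhd A x -> nbhd B x -> nbhd (fun z => A z /\ B z) x.
Proof.
  intros [O1 [HO1 [O1x H1]]] [O2 [HO2 [O2x H2]]].
  exists (fun z => O1 z /\ O2 z); split; [apply open_inter; auto | split; [split; auto|]].
  intros z [O1z O2z]; split; auto.
Qed.

Lemma interior_open A : open (interior A).
Proof.
  apply open_of_nbhd. intros x [O [HO [Ox HOA]]].
  exists O; repeat split; auto. intros y Oy. exists O; auto.
Qed.

Lemma interior_sub A : subset (interior A) A.
Proof. intros x [O [_ [Ox HOA]]]. auto. Qed.

Lemma interior_mono A B : subset A B -> subset (interior A) (interior B).
Proof. intros HAB x Hx. exact (nbhd_mono HAB Hx). Qed.

Lemma spec_le_refl x : spec_le x x.
Proof. apply spec_le_open; auto. Qed.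

Lemma spec_le_trans x y z : spec_le x y -> spec_le y z -> spec_le x z.
Proof.
  rewrite !spec_le_open. intros Hxy Hyz U HU Ux. exact (Hyz U HU (Hxy U HU Ux)).
Qed.

Lemma open_spec_le U x y : open U -> U x -> spec_le x y -> U y.
Proof. intros HU Ux Hxy. exact (proj1 (spec_le_open x y) Hxy U HU Ux). Qed.

Lemma open_not_below z : open (fun y => ~ spec_le y z).
Proof.
  apply open_of_nbhd. intros y Hyz.
  rewrite spec_le_open in Hyz.
  destruct (not_all_ex_not _ _ Hyz) as [O HO].
  apply imply_to_and in HO; destruct HO as [HO HO'].
  apply imply_to_and in HO'; destruct HO' as [Oy nOz].
  exists O; repeat split; auto.
  intros w Ow Hwz. exact (nOz (open_spec_le HO Ow Hwz)).
Qed.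

Lemma sub_up_closure A : subset A (up_closure A).
Proof. intros x Ax. exists x; split; auto using spec_le_refl. Qed.

Lemma up_closure_mono A B : subset A B -> subset (up_closure A) (up_closure B).
Proof. intros HAB z [y [Ay Hyz]]. exists y; auto. Qed.

Lemma up_closure_saturated A : saturated (up_closure A).
Proof. intros z w [y [Ay Hyz]] Hzw. exists y; split; eauto using spec_le_trans. Qed.

Lemma up_closure_sub_open A U : open U -> subset A U -> subset (up_closure A) U.
Proof. intros HU HAU z [y [Ay Hyz]]. exact (open_spec_le HU (HAU y Ay) Hyz). Qed.

Lemma compact_up_closure C : compact C -> compact (up_closure C).
Proof.
  intros HC F HF Hcov.
  destruct (HC F HF) as [l [Hl Hsub]].
  { intros y Cy. apply Hcov, sub_up_closure, Cy. }
  exists l; split; auto.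
  intros z [y [Cy Hyz]]. destruct (Hsub y Cy) as [U [InU Uy]].
  exists U; split; auto. exact (open_spec_le (HF U (Hl U InU)) Uy Hyz).
Qed.

Lemma up_closure_inKX C : (exists x, C x) -> compact C -> inKX (up_closure C).
Proof.
  intros [x Cx] HC. repeat split.
  - exists x. apply sub_up_closure, Cx.
  - apply compact_up_closure, HC.
  - apply up_closure_saturated.
Qed.

Lemma compact_empty : compact (fun _ : X => False).
Proof. intros F _ _. exists nil; split; [intros U [] | intros x []]. Qed.

Lemma compact_union C1 C2 : compact C1 -> compact C2 -> compact (fun x => C1 x \/ C2 x).
Proof.
  intros H1 H2 F HF Hcov.
  destruct (H1 F HF) as [l1 [Hl1 Hs1]]; [intros x Cx; apply Hcov; auto|].
  destruct (H2 F HF) as [l2 [Hl2 Hs2]]; [intros x Cx; apply Hcov; auto|].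
  exists (l1 ++ l2); split.
  - intros U HU. apply in_app_iff in HU as [HU | HU]; auto.
  - intros x [Cx | Cx]; [destruct (Hs1 x Cx) as [U [InU Ux]] | destruct (Hs2 x Cx) as [U [InU Ux]]];
      exists U; split; auto; apply in_app_iff; auto.
Qed.

Lemma compact_between_list V (l : list (X -> Prop)) :
  (forall O, In O l -> exists C, compact C /\ subset O C /\ subset C V) ->
  exists C, compact C /\ subset (fun x => exists O, In O l /\ O x) C /\ subset C V.
Proof.
  induction l as [|O l IH]; intros Hl.
  - exists (fun _ => False); split; [apply compact_empty|split].
    + intros x [O [[] _]].
    + intros x [].
  - destruct (Hl O (or_introl eq_refl)) as [C1 [HC1 [HOC1 HC1V]]].
    destruct IH as [C2 [HC2 [HlC2 HC2V]]]; [intros O' h; apply Hl; right; exact h|].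
    exists (fun x => C1 x \/ C2 x); split; [apply compact_union; auto|split].
    + intros x [O' [[<- | h] O'x]]; [left; auto | right; apply HlC2; exists O'; auto].
    + intros x [h | h]; auto.
Qed.

Definition converges (s : nat -> X) x : Prop :=
  forall U, open U -> U x -> exists N, forall m, N <= m -> U (s m).

Definition seq_tail x (s : nat -> X) (n : nat) : X -> Prop :=
  fun y => y = x \/ exists m, n <= m /\ y = s m.

Lemma finite_segment_cover (s : nat -> X) (F : (X -> Prop) -> Prop) n k :
  (forall m, n <= m -> exists U, F U /\ U (s m)) ->
  exists l, (forall U, In U l -> F U) /\
    forall m, n <= m < n + k -> exists U, In U l /\ U (s m).
Proof.
  intros Htail. induction k as [|k [l [Hl Hcov]]].
  - exists nil; split; [intros U [] | intros m Hm; lia].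
  - destruct (Htail (n + k)) as [U [FU Us]]; [lia|].
    exists (U :: l); split.
    + intros V [<- | h]; auto.
    + intros m Hm. destruct (Nat.eq_dec m (n + k)) as [-> | ne].
      * exists U; split; [left|]; auto.
      * destruct (Hcov m) as [V [InV Vs]]; [lia|]. exists V; split; [right|]; auto.
Qed.

Lemma compact_seq_tail s x n : converges s x -> compact (seq_tail x s n).
Proof.
  intros Hs F HF Hcov.
  destruct (Hcov x) as [O [FO Ox]]; [left; reflexivity|].
  destruct (Hs O (HF O FO) Ox) as [N HN].
  destruct (finite_segment_cover (s := s) (F := F) (n := n) (N - n)) as [l [Hl Hlcov]].
  { intros m hm. apply Hcov. right. exists m; auto. }
  exists (O :: l); split.
  - intros U [<- | h]; auto.
  - intros y [-> | [m [hm ->]]].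
    + exists O; split; [left|]; auto.
    + destruct (Nat.le_gt_cases N m) as [hNm | hmN].
      * exists O; split; [left|]; auto.
      * destruct (Hlcov m) as [U [InU Us]]; [lia|]. exists U; split; [right|]; auto.
Qed.

Lemma seq_tail_inKX s x n : converges s x -> inKX (up_closure (seq_tail x s n)).
Proof.
  intros Hs. apply up_closure_inKX; [exists x; left; reflexivity | apply compact_seq_tail, Hs].
Qed.

Lemma seq_tail_inter_sub_up s x z :
  converges s x -> (forall n, up_closure (seq_tail x s n) z) -> spec_le x z.
Proof.
  intros Hs Hz. apply spec_le_open. intros U HU Ux.
  destruct (Hs U HU Ux) as [N HN].
  destruct (Hz N) as [y [[-> | [m [hm ->]]] Hyz]].
  - exact (open_spec_le HU Ux Hyz).
  - exact (open_spec_le HU (HN m hm) Hyz).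
Qed.

Lemma not_nbhd_converging_seq (Hfc : first_countable X) A x :
  ~ nbhd A x -> exists s, converges s x /\ forall n, ~ A (s n).
Proof.
  intros HA. destruct (Hfc x) as [B [HBn HBb]].
  set (Q := fun n z => forall i, i <= n -> B i z).
  assert (HQ : forall n, nbhd (Q n) x).
  { induction n as [|n IH].
    - apply (nbhd_mono (A := B 0)); [|apply HBn].
      intros z Bz i hi. replace i with 0 by lia. exact Bz.
    - apply (nbhd_mono (A := fun z => Q n z /\ B (S n) z)); [|apply nbhd_inter; auto].
      intros z [Qz Bz] i hi. destruct (Nat.eq_dec i (S n)) as [-> | ne]; [exact Bz|].
      apply Qz. lia. }
  assert (Hs : forall n, exists y, Q n y /\ ~ A y).
  { intro n. destruct (HQ n) as [O [HO [Ox HOQ]]].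
    destruct (not_subset_ex (A := O) (B := A)) as [y [Oy nAy]].
    - intro HOA. apply HA. exists O; auto.
    - exists y; auto. }
  destruct (choice _ Hs) as [s Hs'].
  exists s; split; [|intro n; apply Hs'].
  intros U HU Ux.
  destruct (HBb U (open_nbhd HU Ux)) as [N HN].
  exists N. intros m hm. apply HN, (proj1 (Hs' m)), hm.
Qed.

Lemma well_filtered_seq (Hwf : well_filtered X) (K : nat -> X -> Prop) U :
  (forall n, inKX (K n)) -> (forall n m, n <= m -> subset (K m) (K n)) ->
  open U -> subset (fun x => forall n, K n x) U -> exists n, subset (K n) U.
Proof.
  intros HK Hanti HU HKU.
  destruct (Hwf U (fun L => exists n, L = K n) HU) as [L [[n ->] HnU]].
  - intros L [n ->]. apply HK.
  - split; [exists (K 0), 0; reflexivity|].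
    intros L1 L2 [n1 ->] [n2 ->]. exists (K (max n1 n2)).
    split; [exists (max n1 n2); reflexivity | split; apply Hanti; lia].
  - intros x Hx. apply HKU. intro n. apply Hx. exists n; reflexivity.
  - exists n; exact HnU.
Qed.

End Topology.

Section Preorder.
Variables (P : Type) (le : P -> P -> Prop).
Hypothesis le_refl : forall a, le a a.
Hypothesis le_trans : forall a b c, le a b -> le b c -> le a c.

Lemma way_below_le a b : way_below le a b -> le a b.
Proof.
  intros Hab. destruct (Hab (fun d => d = b) b) as [d [-> Hd]]; auto.
  - split; [exists b; reflexivity|]. intros a0 b0 -> ->. exists b; auto.
  - split; [intros d ->; auto | intros u Hu; apply Hu; reflexivity].
Qed.

Lemma way_below_mono a a' b b' :
  le a' a -> way_below le a b -> le b b' -> way_below le a' b'.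
Proof.
  intros Ha H Hb D s HD Hs Hb's. destruct (H D s HD Hs) as [d [Dd Had]]; eauto.
Qed.

Lemma directed_list_ub D (l : list P) :
  directed le D -> (forall a, In a l -> D a) -> exists d, D d /\ forall a, In a l -> le a d.
Proof.
  intros [[d0 Dd0] Hdir]. induction l as [|a l IH]; intros Hl.
  - exists d0; split; [exact Dd0 | intros a []].
  - destruct IH as [d1 [D1 H1]]; [intros b h; apply Hl; right; exact h|].
    destruct (Hdir a d1 (Hl a (or_introl eq_refl)) D1) as [d [Dd [Had Hd1d]]].
    exists d; split; [exact Dd|].
    intros b [<- | h]; [exact Had | exact (le_trans (H1 b h) Hd1d)].
Qed.

End Preorder.

Section OpenLattice.
Variable X : space.
Implicit Types (W V : OX X) (D : OX X -> Prop).

Lemma OX_le_refl V : OX_le V V.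
Proof. intros x h; exact h. Qed.

Lemma OX_le_trans V1 V2 V3 : OX_le V1 V2 -> OX_le V2 V3 -> OX_le V1 V3.
Proof. intros h12 h23 x h; exact (h23 x (h12 x h)). Qed.

Definition OX_union D : OX X.
Proof.
  refine (exist _ (fun x => exists d, D d /\ proj1_sig d x) _).
  apply (open_ext (U := bigunion (fun U => exists d, D d /\ proj1_sig d = U))).
  - intro x; split.
    + intros [U [[d [Dd <-]] dx]]. exists d; auto.
    + intros [d [Dd dx]]. exists (proj1_sig d); split; [exists d|]; auto.
  - apply open_union. intros U [d [_ <-]]. exact (proj2_sig d).
Defined.

Lemma OX_union_is_sup D : is_sup (@OX_le X) D (OX_union D).
Proof.
  split.
  - intros d Dd x dx. exists d; auto.
  - intros u Hu x [d [Dd dx]]. exact (Hu d Dd x dx).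
Qed.

Lemma OX_sup_sub_union D s :
  is_sup (@OX_le X) D s -> subset (proj1_sig s) (fun x => exists d, D d /\ proj1_sig d x).
Proof. intros [_ Hleast]. exact (Hleast (OX_union D) (proj1 (OX_union_is_sup D))). Qed.

Definition OX_empty : OX X := exist _ (fun _ => False) (open_empty X).

Definition OX_union2 W V : OX X :=
  exist _ (fun x => proj1_sig W x \/ proj1_sig V x) (open_union2 (proj2_sig W) (proj2_sig V)).

Lemma OX_le_union2_l W V : OX_le W (OX_union2 W V).
Proof. intros x h; left; exact h. Qed.

Lemma OX_le_union2_r W V : OX_le V (OX_union2 W V).
Proof. intros x h; right; exact h. Qed.

Lemma OX_empty_way_below V : way_below (@OX_le X) OX_empty V.
Proof. intros D s [[d Dd] _] _ _. exists d; split; [exact Dd | intros x []]. Qed.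

Lemma OX_union2_way_below W1 W2 V :
  way_below (@OX_le X) W1 V -> way_below (@OX_le X) W2 V ->
  way_below (@OX_le X) (OX_union2 W1 W2) V.
Proof.
  intros H1 H2 D s HD Hs HVs.
  destruct (H1 D s HD Hs HVs) as [d1 [D1 Hd1]].
  destruct (H2 D s HD Hs HVs) as [d2 [D2 Hd2]].
  destruct (proj2 HD d1 d2 D1 D2) as [d [Dd [Hd1d Hd2d]]].
  exists d; split; [exact Dd|]. intros x [h | h]; [apply Hd1d, Hd1 | apply Hd2d, Hd2]; exact h.
Qed.

Lemma way_below_cover W V (F : (X -> Prop) -> Prop) :
  way_below (@OX_le X) W V -> (forall U, F U -> open U) -> directed (@subset X) F ->
  subset (proj1_sig V) (bigunion F) -> exists U, F U /\ subset (proj1_sig W) U.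
Proof.
  intros HW HF [[U0 FU0] HdirF] HVF.
  set (D := fun d : OX X => F (proj1_sig d)).
  assert (HD : directed (@OX_le X) D).
  { split; [exists (exist _ U0 (HF U0 FU0)); exact FU0|].
    intros d1 d2 D1 D2. destruct (HdirF _ _ D1 D2) as [U [FU [H1 H2]]].
    exists (exist _ U (HF U FU)); auto. }
  destruct (HW D (OX_union D) HD (OX_union_is_sup D)) as [d [Dd HWd]].
  - intros x Vx. destruct (HVF x Vx) as [U [FU Ux]].
    exists (exist _ U (HF U FU)); auto.
  - exists (proj1_sig d); auto.
Qed.

Lemma way_below_of_compact W V C :
  compact C -> subset (proj1_sig W) C -> subset C (proj1_sig V) -> way_below (@OX_le X) W V.
Proof.
  intros HC HWC HCV D s HD Hs HVs.
  set (F := fun U => exists d, D d /\ proj1_sig d = U).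
  destruct (HC F) as [l [Hl Hlcov]].
  - intros U [d [_ <-]]. exact (proj2_sig d).
  - intros x Cx. destruct (OX_sup_sub_union Hs (HVs x (HCV x Cx))) as [d [Dd dx]].
    exists (proj1_sig d); split; [exists d|]; auto.
  - assert (HF : directed (@subset X) F).
    { destruct HD as [[d0 Dd0] Hdir]. split; [exists (proj1_sig d0), d0; auto|].
      intros U1 U2 [d1 [D1 <-]] [d2 [D2 <-]].
      destruct (Hdir d1 d2 D1 D2) as [d [Dd [H1 H2]]].
      exists (proj1_sig d); split; [exists d|]; auto. }
    destruct (directed_list_ub (@subset_trans X) HF Hl) as [U [[d [Dd <-]] HlU]].
    exists d; split; [exact Dd|]. intros x Wx.
    destruct (Hlcov x (HWC x Wx)) as [U [InU Ux]]. exact (HlU U InU x Ux).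
Qed.

Section CoreCompact.
Hypothesis Hcc : core_compact X.

Lemma core_compact_point V x :
  proj1_sig V x -> exists W, way_below (@OX_le X) W V /\ proj1_sig W x.
Proof. intros Vx. exact (OX_sup_sub_union (proj2 (proj2 Hcc V)) Vx). Qed.

Lemma core_compact_interpolation W V :
  way_below (@OX_le X) W V ->
  exists V', way_below (@OX_le X) W V' /\ way_below (@OX_le X) V' V.
Proof.
  intros HW.
  set (D := fun O => exists O', way_below (@OX_le X) O O' /\ way_below (@OX_le X) O' V).
  assert (HD : directed (@OX_le X) D).
  { split.
    - exists OX_empty, OX_empty. split; apply OX_empty_way_below.
    - intros a b [a' [Ha Ha']] [b' [Hb Hb']].
      exists (OX_union2 a b); split; [|split; [apply OX_le_union2_l | apply OX_le_union2_r]].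
      exists (OX_union2 a' b'); split; [|apply OX_union2_way_below; assumption].
      apply OX_union2_way_below.
      + exact (way_below_mono (@OX_le_trans) (@OX_le_refl a) Ha (@OX_le_union2_l a' b')).
      + exact (way_below_mono (@OX_le_trans) (@OX_le_refl b) Hb (@OX_le_union2_r a' b')). }
  destruct (HW D (OX_union D) HD (OX_union_is_sup D)) as [d [[O' [HdO' HO'V]] HWd]].
  - intros x Vx. destruct (core_compact_point Vx) as [W1 [HW1 W1x]].
    destruct (core_compact_point W1x) as [W2 [HW2 W2x]].
    exists W2; split; [exists W1|]; auto.
  - exists O'; split; [|exact HO'V].
    exact (way_below_mono (@OX_le_trans) HWd HdO' (@OX_le_refl O')).
Qed.

End CoreCompact.
End OpenLattice.

Section CompactLattice.
Variable X : space.
Implicit Types (a b d k : KX X) (D : KX X -> Prop).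

Definition KX_inter D : X -> Prop := fun x => forall d, D d -> proj1_sig d x.

Lemma KX_le_refl a : KX_le a a.
Proof. intros x h; exact h. Qed.

Lemma KX_is_sup_of_inter D b :
  (forall d, D d -> KX_le d b) -> subset (KX_inter D) (proj1_sig b) -> is_sup (@KX_le X) D b.
Proof.
  intros Hub Hinter. split; [exact Hub|].
  intros u Hu x ux. apply Hinter. intros d Dd. exact (Hu d Dd x ux).
Qed.

Lemma xi_sigma_continuous_of_Q :
  continuous_poset (@KX_le X) -> property_Q X -> xi_sigma_continuous X.
Proof.
  intros [_ Hcont] HQ 𝒰 [Hupper Hscott]. apply open_of_nbhd. intros x Hx.
  destruct (Hcont (upK x)) as [Hdir Hsup].
  destruct (Hscott _ _ Hdir Hsup Hx) as [d [Hdx 𝒰d]].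
  destruct (proj1 (HQ d (upK x)) Hdx x (spec_le_refl (x := x))) as [O [HO [Ox HOd]]].
  exists O; repeat split; auto. intros y Oy.
  apply (Hupper d); [exact 𝒰d|]. intros z Hyz.
  destruct (proj2_sig d) as [_ [_ Hsat]]. exact (Hsat y z (HOd y Oy) Hyz).
Qed.

Section WellFiltered.
Hypothesis Hwf : well_filtered X.

Lemma well_filtered_directed D U :
  directed (@KX_le X) D -> open U -> subset (KX_inter D) U ->
  exists d, D d /\ subset (proj1_sig d) U.
Proof.
  intros [[d0 Dd0] Hdir] HU HDU.
  destruct (Hwf (KK := fun K => exists d, D d /\ proj1_sig d = K) HU) as [K [[d [Dd <-]] HdU]].
  - intros K [d [_ <-]]. exact (proj2_sig d).
  - split; [exists (proj1_sig d0), d0; auto|].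
    intros K1 K2 [d1 [D1 <-]] [d2 [D2 <-]].
    destruct (Hdir d1 d2 D1 D2) as [d [Dd [H1 H2]]].
    exists (proj1_sig d); split; [exists d|]; auto.
  - intros x Hx. apply HDU. intros d Dd. apply Hx. exists d; auto.
  - exists d; auto.
Qed.

Lemma KX_inter_inKX D : directed (@KX_le X) D -> inKX (KX_inter D).
Proof.
  intros HD. repeat split.
  - apply NNPP; intros Hempty.
    destruct (well_filtered_directed HD (open_empty X)) as [d [_ Hd]].
    + intros x Hx. apply Hempty. exists x; exact Hx.
    + destruct (proj2_sig d) as [[x dx] _]. exact (Hd x dx).
  - intros F HF Hcov.
    destruct (well_filtered_directed HD (open_union HF) Hcov) as [d [Dd HdF]].
    destruct (proj2_sig d) as [_ [Hdc _]].
    destruct (Hdc F HF HdF) as [l [Hl Hlcov]].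
    exists l; split; [exact Hl|]. intros x Hx. exact (Hlcov x (Hx d Dd)).
  - intros x y Hx Hxy d Dd. destruct (proj2_sig d) as [_ [_ Hsat]].
    exact (Hsat x y (Hx d Dd) Hxy).
Qed.

Lemma KX_directed_complete : directed_complete (@KX_le X).
Proof.
  intros D HD. exists (exist _ _ (KX_inter_inKX HD)).
  apply KX_is_sup_of_inter; [|intros x h; exact h].
  intros d Dd x Hx. exact (Hx d Dd).
Qed.

Lemma KX_inter_sub_sup D s :
  directed (@KX_le X) D -> is_sup (@KX_le X) D s -> subset (KX_inter D) (proj1_sig s).
Proof.
  intros HD [_ Hleast].
  apply (Hleast (exist _ _ (KX_inter_inKX HD))). intros d Dd x Hx. exact (Hx d Dd).
Qed.

Lemma way_below_of_interior a b :
  subset (proj1_sig b) (interior (proj1_sig a)) -> way_below (@KX_le X) a b.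
Proof.
  intros Hba D s HD Hs Hbs.
  destruct (well_filtered_directed HD (interior_open (proj1_sig a))) as [d [Dd Hd]].
  - intros x Hx. apply Hba, Hbs, (KX_inter_sub_sup HD Hs), Hx.
  - exists d; split; [exact Dd|]. intros x dx. exact (interior_sub (Hd x dx)).
Qed.

End WellFiltered.
End CompactLattice.

Section WayBelowChain.
Variable X : space.
Hypothesis Hwf : well_filtered X.
Variable V : nat -> OX X.
Hypothesis HV : forall n, way_below (@OX_le X) (V (S n)) (V n).

Definition chain_inter : X -> Prop := fun x => forall n, proj1_sig (V n) x.

Lemma chain_antitone n m : n <= m -> OX_le (V m) (V n).
Proof.
  induction 1 as [|m _ IH]; [apply OX_le_refl|].
  exact (OX_le_trans (way_below_le (@OX_le_refl X) (HV (n := m))) IH).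
Qed.

Section Avoiding.
Variable G : X -> Prop.
Hypothesis HG : open G.
Hypothesis HVG : forall n, ~ subset (proj1_sig (V n)) G.

Definition avoids (O : X -> Prop) : Prop :=
  open O /\ forall n, ~ subset (proj1_sig (V n)) (fun z => O z \/ G z).

(* The union of a chain is covered by the directed family O u G (O in C), so
   V (S n) << V n puts V (S n) inside a single O u G. *)
Lemma avoids_chain_union (C : (X -> Prop) -> Prop) :
  (forall O, C O -> avoids O) -> (forall O1 O2, C O1 -> C O2 -> subset O1 O2 \/ subset O2 O1) ->
  avoids (bigunion C).
Proof.
  intros HC Htot. split; [apply open_union; intros O CO; exact (proj1 (HC O CO))|].
  intros n Hcov.
  destruct (classic (exists O0, C O0)) as [[O0 CO0] | Hempty].
  2: { apply (HVG (n := n)). intros x Vx. destruct (Hcov x Vx) as [[O [CO _]] | Gx]; [|exact Gx].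
       exfalso; apply Hempty; exists O; exact CO. }
  set (F := fun U => exists O, C O /\ U = (fun z => O z \/ G z)).
  destruct (way_below_cover (HV (n := n)) (F := F)) as [U [[O [CO ->]] HsubO]].
  - intros U [O [CO ->]]. apply open_union2; [exact (proj1 (HC O CO)) | exact HG].
  - split; [exists (fun z => O0 z \/ G z), O0; auto|].
    intros U1 U2 [O1 [C1 ->]] [O2 [C2 ->]].
    destruct (Htot O1 O2 C1 C2) as [H12 | H21].
    + exists (fun z => O2 z \/ G z); split; [exists O2; auto|].
      split; intros z [h | h]; auto.
    + exists (fun z => O1 z \/ G z); split; [exists O1; auto|].
      split; intros z [h | h]; auto.
  - intros x Vx. destruct (Hcov x Vx) as [[O [CO Ox]] | Gx].
    + exists (fun z => O z \/ G z); split; [exists O|]; auto.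
    + exists (fun z => O0 z \/ G z); split; [exists O0|]; auto.
  - exact (proj2 (HC O CO) (S n) HsubO).
Qed.

Lemma maximal_avoider :
  exists O, avoids O /\ forall O', subset O O' -> ~ subset O' O -> ~ avoids O'.
Proof.
  destruct (classical_sets.Zorn_bigcup (P := avoids)) as [O [HO Hmax]].
  - intros C HC Htot.
    replace (classical_sets.bigcup C (fun O => O)) with (bigunion C).
    + apply avoids_chain_union; [exact HC | exact Htot].
    + apply functional_extensionality; intro x; apply propositional_extensionality.
      split; [intros [O [CO Ox]]; exists O | intros [O CO Ox]; exists O]; auto.
  - exists O; split; [exact HO|]. intros O' H1 H2. apply Hmax. split; assumption.
Qed.

(* If a neighbourhood U of y missed infinitely many a_m, then O u U would still
   avoid, contradicting maximality. *)
Lemma maximal_avoider_seq_converges O (a : nat -> X) :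
  avoids O -> (forall O', subset O O' -> ~ subset O' O -> ~ avoids O') ->
  (forall n, proj1_sig (V n) (a n) /\ ~ (O (a n) \/ G (a n))) ->
  forall y, ~ (O y \/ G y) -> converges a y.
Proof.
  intros HO Hmax Ha y Hy U HU Uy. apply NNPP; intros Hnot.
  apply (Hmax (fun z => O z \/ U z)).
  - intros z h; left; exact h.
  - intros h. apply Hy. left. apply h. right. exact Uy.
  - split; [apply open_union2; [exact (proj1 HO) | exact HU]|].
    intros n Hsub.
    destruct (not_all_ex_not _ _ (fun H => Hnot (ex_intro _ n H))) as [m Hm].
    apply imply_to_and in Hm as [hm nUa].
    destruct (Ha m) as [Vam Ham].
    destruct (Hsub (a m) (chain_antitone hm Vam)) as [[h | h] | h]; auto.
Qed.

End Avoiding.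

Lemma chain_sub_open G : open G -> subset chain_inter G -> exists n, subset (proj1_sig (V n)) G.
Proof.
  intros HG HVG. apply NNPP; intros Hno.
  assert (HVG' : forall n, ~ subset (proj1_sig (V n)) G).
  { intros n h. apply Hno. exists n; exact h. }
  destruct (maximal_avoider HG HVG') as [O [HO Hmax]].
  assert (Ha : forall n, exists z, proj1_sig (V n) z /\ ~ (O z \/ G z)).
  { intro n. exact (not_subset_ex (proj2 HO n)). }
  destruct (choice _ Ha) as [a Ha'].
  set (T := fun n => up_closure (seq_tail (a n) a n)).
  destruct (well_filtered_seq Hwf (K := T) (U := G)) as [n HTn].
  - intro n. apply seq_tail_inKX, (maximal_avoider_seq_converges HO Hmax Ha'), (proj2 (Ha' n)).
  - intros n m hnm. apply up_closure_mono.
    intros w [-> | [k [hk ->]]]; right; [exists m | exists k]; split; auto; lia.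
  - exact HG.
  - intros z Hz. apply HVG. intro k. destruct (Hz k) as [w [Hw Hwz]].
    apply (open_spec_le (proj2_sig (V k)) (x := w)); [|exact Hwz].
    destruct Hw as [-> | [m [hm ->]]];
      [exact (proj1 (Ha' k)) | exact (chain_antitone hm (proj1 (Ha' m)))].
  - apply (proj2 (Ha' n)). right. apply HTn, sub_up_closure. left; reflexivity.
Qed.

Lemma chain_inter_compact : compact chain_inter.
Proof.
  intros F HF Hcov.
  destruct (chain_sub_open (open_union HF) Hcov) as [n Hn].
  set (Fin := fun U =>
    exists l, (forall O, In O l -> F O) /\ U = (fun x => exists O, In O l /\ O x)).
  destruct (way_below_cover (HV (n := n)) (F := Fin)) as [U [[l [Hl ->]] Hsub]].
  - intros U [l [Hl ->]]. apply (open_union (F := fun O => In O l)). intros O h. apply HF, Hl, h.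
  - split; [exists (fun x => exists O, In O nil /\ O x), nil; split; [intros O [] | reflexivity]|].
    intros U1 U2 [l1 [Hl1 ->]] [l2 [Hl2 ->]].
    exists (fun x => exists O, In O (l1 ++ l2) /\ O x); split; [|split].
    + exists (l1 ++ l2); split; [|reflexivity].
      intros O h. apply in_app_iff in h as [h | h]; auto.
    + intros x [O [h Ox]]. exists O; split; [apply in_app_iff|]; auto.
    + intros x [O [h Ox]]. exists O; split; [apply in_app_iff|]; auto.
  - intros x Vx. destruct (Hn x Vx) as [O [FO Ox]].
    exists (fun x => exists O', In O' (O :: nil) /\ O' x); split.
    + exists (O :: nil); split; [intros O' [<- | []]; exact FO | reflexivity].
    + exists O; split; [left|]; auto.
  - exists l; split; [exact Hl|]. intros x Hx. apply Hsub, Hx.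
Qed.

End WayBelowChain.

Section CoreCompactness.
Variable X : space.
Hypothesis Hcc : core_compact X.

Lemma core_compact_way_below_chain (W U : OX X) :
  way_below (@OX_le X) W U ->
  exists V : nat -> OX X, V 0 = U /\ (forall n, way_below (@OX_le X) W (V n)) /\
    (forall n, way_below (@OX_le X) (V (S n)) (V n)).
Proof.
  intros HWU.
  assert (Hstep : forall V, exists V',
             way_below (@OX_le X) W V -> way_below (@OX_le X) W V' /\ way_below (@OX_le X) V' V).
  { intro V. destruct (classic (way_below (@OX_le X) W V)) as [HWV | nHWV].
    - destruct (core_compact_interpolation Hcc HWV) as [V' HV']. exists V'; auto.
    - exists V; intro h; contradiction. }
  destruct (choice _ Hstep) as [step Hstep'].
  set (V := fun n => Nat.iter n step U).
  assert (HWV : forall n, way_below (@OX_le X) W (V n)).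
  { induction n as [|n IH]; [exact HWU | exact (proj1 (Hstep' _ IH))]. }
  exists V; split; [reflexivity | split; [exact HWV|]].
  intro n. exact (proj2 (Hstep' _ (HWV n))).
Qed.

Lemma core_compact_locally_compact : well_filtered X -> locally_compact X.
Proof.
  intros Hwf x U HU Ux.
  destruct (core_compact_point Hcc (V := exist _ U HU) Ux) as [W [HWU Wx]].
  destruct (core_compact_way_below_chain HWU) as [V [HV0 [HWV HV]]].
  exists (chain_inter V); split; [exact (chain_inter_compact Hwf HV) | split].
  - exists (proj1_sig W); repeat split; [exact (proj2_sig W) | exact Wx |].
    intros z Wz n. exact (way_below_le (@OX_le_refl X) (HWV n) z Wz).
  - intros z Hz. pose proof (Hz 0) as h. rewrite HV0 in h. exact h.
Qed.

End CoreCompactness.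

Section LocallyCompact.
Variable X : space.
Hypothesis HLC : locally_compact X.
Implicit Types (a b : KX X).

Definition KX_nbhds b : KX X -> Prop :=
  fun L : KX X => subset (proj1_sig b) (interior (proj1_sig L)).

Lemma compact_saturated_nbhd (K V : X -> Prop) :
  compact K -> open V -> subset K V ->
  exists L, compact L /\ saturated L /\ subset K (interior L) /\ subset L V.
Proof.
  intros HK HV HKV.
  set (F := fun O => open O /\ exists C, compact C /\ subset O C /\ subset C V).
  destruct (HK F) as [l [Hl Hlcov]].
  - intros O [HO _]; exact HO.
  - intros x Kx. destruct (HLC HV (HKV x Kx)) as [C [HC [[O [HO [Ox HOC]]] HCV]]].
    exists O; split; [split; [exact HO | exists C; auto] | exact Ox].
  - destruct (compact_between_list (V := V) (l := l)) as [C [HC [HlC HCV]]].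
    { intros O InO. exact (proj2 (Hl O InO)). }
    exists (up_closure C); repeat split.
    + apply compact_up_closure, HC.
    + apply up_closure_saturated.
    + intros x Kx. exists (fun x => exists O, In O l /\ O x); repeat split.
      * apply (open_union (F := fun O => In O l)). intros O InO. exact (proj1 (Hl O InO)).
      * exact (Hlcov x Kx).
      * intros y Hy. apply sub_up_closure, HlC, Hy.
    + apply up_closure_sub_open; [exact HV | exact HCV].
Qed.

Lemma KX_nbhd_sub_open b (V : X -> Prop) :
  open V -> subset (proj1_sig b) V -> exists L : KX X, KX_nbhds b L /\ subset (proj1_sig L) V.
Proof.
  intros HV HbV. destruct (proj2_sig b) as [[x bx] [Hbc _]].
  destruct (compact_saturated_nbhd Hbc HV HbV) as [L [HLc [HLs [HbL HLV]]]].
  assert (HL : inKX L).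
  { repeat split; [exists x; exact (interior_sub (HbL x bx)) | |]; assumption. }
  exists (exist _ L HL); split; assumption.
Qed.

Lemma KX_nbhds_directed b : directed (@KX_le X) (KX_nbhds b).
Proof.
  split.
  - destruct (KX_nbhd_sub_open (b := b) (open_full X)) as [L [HL _]]; [intros x _; exact I|].
    exists L; exact HL.
  - intros L1 L2 H1 H2.
    destruct (KX_nbhd_sub_open (b := b) (open_inter (interior_open (proj1_sig L1))
                                             (interior_open (proj1_sig L2)))) as [L [HL HLsub]].
    { intros x bx. split; [apply H1 | apply H2]; exact bx. }
    exists L; split; [exact HL | split; intros x Lx].
    + exact (interior_sub (proj1 (HLsub x Lx))).
    + exact (interior_sub (proj2 (HLsub x Lx))).
Qed.

(* Points outside the saturated set b are separated from it by a compact
   neighbourhood inside the open complement of their closure. *)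
Lemma KX_nbhds_sup b : is_sup (@KX_le X) (KX_nbhds b) b.
Proof.
  apply KX_is_sup_of_inter.
  - intros L HL x bx. exact (interior_sub (HL x bx)).
  - intros z Hz. apply NNPP; intros nbz.
    destruct (KX_nbhd_sub_open (b := b) (open_not_below z)) as [L [HL HLz]].
    + intros y bye hyz. apply nbz. destruct (proj2_sig b) as [_ [_ Hsat]]. exact (Hsat y z bye hyz).
    + exact (HLz z (Hz L HL) (spec_le_refl (x := z))).
Qed.

Lemma locally_compact_core_compact : core_compact X.
Proof.
  split; [intros D _; exists (OX_union D); apply OX_union_is_sup|].
  intro V. split; [split|split].
  - exists (OX_empty X). apply OX_empty_way_below.
  - intros W1 W2 H1 H2. exists (OX_union2 W1 W2).
    split; [apply OX_union2_way_below; assumption|].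
    split; [apply OX_le_union2_l | apply OX_le_union2_r].
  - intros W HW. exact (way_below_le (@OX_le_refl X) HW).
  - intros u Hu x Vx.
    destruct (HLC (proj2_sig V) Vx) as [C [HC [[O [HO [Ox HOC]]] HCV]]].
    exact (Hu (exist _ O HO) (way_below_of_compact (W := exist _ O HO) HC HOC HCV) x Ox).
Qed.

Section WellFiltered.
Hypothesis Hwf : well_filtered X.

Lemma locally_compact_property_Q : property_Q X.
Proof.
  intros a b. split; [|apply way_below_of_interior, Hwf].
  intros Hab.
  destruct (Hab _ b (KX_nbhds_directed b) (KX_nbhds_sup b) (@KX_le_refl X b)) as [L [HL HaL]].
  intros x bx. exact (interior_mono HaL (HL x bx)).
Qed.

Lemma locally_compact_KX_continuous : continuous_poset (@KX_le X).
Proof.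
  split; [exact (KX_directed_complete Hwf)|].
  intro b.
  replace (fun a => way_below (@KX_le X) a b) with (KX_nbhds b).
  - split; [apply KX_nbhds_directed | apply KX_nbhds_sup].
  - apply functional_extensionality; intro a; apply propositional_extensionality.
    symmetry; apply locally_compact_property_Q.
Qed.

End WellFiltered.
End LocallyCompact.

Section ContinuousKX.
Variable X : space.
Hypothesis Hwf : well_filtered X.
Hypothesis Hfc : first_countable X.

Lemma continuous_KX_way_below_sub_open (b : KX X) (U : X -> Prop) :
  continuous_poset (@KX_le X) -> open U -> subset (proj1_sig b) U ->
  exists k, way_below (@KX_le X) k b /\ subset (proj1_sig k) U.
Proof.
  intros [_ Hcont] HU HbU. destruct (Hcont b) as [Hdir Hsup].
  apply (well_filtered_directed Hwf Hdir HU).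
  intros x Hx. apply HbU, (KX_inter_sub_sup Hwf Hdir Hsup), Hx.
Qed.

(* If k is not a neighbourhood of x, a sequence outside k converges to x; the
   up-closures of its tails (with x added) form a directed family with supremum
   up x, none of which lies in k. *)
Lemma way_below_up_nbhd (k : KX X) x :
  way_below (@KX_le X) k (upK x) -> nbhd (proj1_sig k) x.
Proof.
  intros Hk. apply NNPP; intros Hnot.
  destruct (not_nbhd_converging_seq Hfc Hnot) as [s [Hs Hsk]].
  set (L := fun n => exist _ _ (seq_tail_inKX n Hs) : KX X).
  destruct (Hk (fun d => exists n, d = L n) (upK x)) as [d [[n ->] HkL]].
  - split; [exists (L 0), 0; reflexivity|].
    intros d1 d2 [n1 ->] [n2 ->]. exists (L (max n1 n2)); split; [exists (max n1 n2); reflexivity|].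
    split; apply up_closure_mono; intros w [-> | [m [hm ->]]];
      solve [left; reflexivity | right; exists m; split; [lia | reflexivity]].
  - apply KX_is_sup_of_inter.
    + intros d [n ->] y Hxy. exists x; split; [left; reflexivity | exact Hxy].
    + intros z Hz. apply (seq_tail_inter_sub_up Hs).
      intro n. exact (Hz (L n) (ex_intro _ n eq_refl)).
  - apply KX_le_refl.
  - apply (Hsk n), HkL. exists (s n); split; [right; exists n; auto | apply spec_le_refl].
Qed.

Lemma continuous_KX_locally_compact : continuous_poset (@KX_le X) -> locally_compact X.
Proof.
  intros Hcont x U HU Ux.
  destruct (continuous_KX_way_below_sub_open (b := upK x) Hcont HU) as [k [Hk HkU]].
  - intros y Hxy. exact (open_spec_le HU Ux Hxy).
  - exists (proj1_sig k); repeat split.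
    + exact (proj1 (proj2 (proj2_sig k))).
    + apply way_below_up_nbhd, Hk.
    + exact HkU.
Qed.

End ContinuousKX.

Theorem mainTheorem12 (X : space)
  (HT0 : T0 X) (Hfc : first_countable X) (Hwf : well_filtered X)
  (Hmin : forall K : X -> Prop, inKX K -> countable (minimal K)) :
  (locally_compact X <->
     (continuous_poset (@KX_le X) /\ xi_sigma_continuous X)) /\
  (locally_compact X <->
     (continuous_poset (@KX_le X) /\ property_Q X)) /\
  (locally_compact X <-> continuous_poset (@KX_le X)) /\
  (locally_compact X <-> core_compact X).
Proof.
  assert (HlcK : locally_compact X -> continuous_poset (@KX_le X) /\ property_Q X).
  { intros Hlc.
    split; [apply locally_compact_KX_continuous | apply locally_compact_property_Q]; assumption. }
  pose proof (continuous_KX_locally_compact Hwf Hfc) as HKlc.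
  split; [|split; [|split]]; split.
  - intros Hlc. destruct (HlcK Hlc) as [HK HQ].
    split; [exact HK | exact (xi_sigma_continuous_of_Q HK HQ)].
  - intros [HK _]. exact (HKlc HK).
  - exact HlcK.
  - intros [HK _]. exact (HKlc HK).
  - intros Hlc. exact (proj1 (HlcK Hlc)).
  - exact HKlc.
  - apply locally_compact_core_compact.
  - intros Hcc. exact (core_compact_locally_compact Hcc Hwf).
Qed.
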